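(* Let $n,m\ge1$ and $P\in\mathbb{C}[x_1,\dots,x_n]$. Then $P$ is invariant under the quasi-symmetrizing action of $G_{n,m}$ (i.e. $g\bullet P=P$ for all $g\in G_{n,m}$) if and only if there exists a quasi-symmetric polynomial $Q\in\mathbb{C}[x_1,\dots,x_n]$ such that $P(x_1,\dots,x_n)=Q(x_1^m,\dots,x_n^m)$.
   Context: $G_{n,m}$ is the group of $n\times n$ matrices having exactly one non-zero entry in each row and each column, these entries being $m$-th roots of unity. For $g\in G_{n,m}$, $w(g)$ is the product of its non-zero entries, $|g|$ the permutation matrix of entrywise moduli, and $\sigma_g$ the permutation with $(x_1,\dots,x_n)\cdot{}^t|g|=(x_{\sigma_g(1)},\dots,x_{\sigma_g(n)})$. The quasi-symmetrizing action is linear and defined on monomials by: for $a_1<\dots<a_l$ and positive integers $K=(k_1,\dots,k_l)$, $g\bullet(x_{a_1}^{k_1}\cdots x_{a_l}^{k_l})=w(g)^{c(K)}x_{b_1}^{k_1}\cdots x_{b_l}^{k_l}$, where $b_1<\dots<b_l$ is the increasing rearrangement of $\sigma_g(a_1),\dots,\sigma_g(a_l)$, and $c(K)=0$ if all $k_i$ are divisible by $m$, $c(K)=1$ otherwise. For $\nu\in\mathbb{N}^n$, let $c(\nu)$ be the composition obtained by deleting the zero entries of $\nu$; a polynomial $Q$ is quasi-symmetric if the coefficients of $x^\nu$ and $x^\mu$ in $Q$ are equal whenever $c(\nu)=c(\mu)$. *)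

From HB Require Import structures.
From mathcomp Require Import all_boot all_order all_algebra all_field.
From mathcomp Require Import mpoly.
Set Implicit Arguments. Unset Strict Implicit. Unset Printing Implicit Defensive.
Import Order.TTheory GRing.Theory Num.Theory.
Local Open Scope ring_scope.

Definition Gnm (n m : nat) : pred 'M[algC]_n := fun g =>
  [&& [forall i, #|[set j | g i j != 0]| == 1%N],
      [forall j, #|[set i | g i j != 0]| == 1%N] &
      [forall i, forall j, (g i j != 0) ==> (g i j ^+ m == 1)]].

Definition wg n (g : 'M[algC]_n) : algC :=
  \prod_(i < n) \prod_(j < n | g i j != 0) g i j.

Definition absmx n (g : 'M[algC]_n) : 'M[algC]_n := map_mx (fun x => `|x|) g.

(* sigma_g: (x_1..x_n) *m (|g|)^T = (x_{sigma(1)},..,x_{sigma(n)}), i.e.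
   sigma_g(i) is the column of the (unique) nonzero entry of row i of |g|. *)
Definition sigma_g n (g : 'M[algC]_n) (i : 'I_n) : 'I_n :=
  odflt i [pick j | absmx g i j != 0].

Definition cK n (m : nat) (nu : 'X_{1..n}) : nat :=
  if [forall i, (nu i != 0%N) ==> (m %| nu i)%N] then 0%N else 1%N.

(* the monomial x_{b_1}^{k_1}...x_{b_l}^{k_l}, where a_1<..<a_l is the support of
   nu, k_r = nu a_r, and b_1<..<b_l is the increasing rearrangement of the s(a_r) *)
Definition qs_mono n (s : 'I_n -> 'I_n) (nu : 'X_{1..n}) : 'X_{1..n} :=
  let A := [seq a <- enum 'I_n | nu a != 0%N] in
  let B := sort (fun x y : 'I_n => (x <= y)%N) [seq s a | a <- A] in
  [multinom (if b \in B then nu (nth b A (index b B)) else 0%N) | b < n].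

Definition qs_act n (m : nat) (g : 'M[algC]_n) (P : {mpoly algC[n]}) : {mpoly algC[n]} :=
  \sum_(nu <- msupp P) (P@_nu * wg g ^+ cK m nu) *: 'X_[qs_mono (sigma_g g) nu].

Definition compo n (nu : 'X_{1..n}) : seq nat :=
  [seq nu i | i <- enum 'I_n & nu i != 0%N].

Definition quasi_symmetric n (Q : {mpoly algC[n]}) : Prop :=
  forall nu mu : 'X_{1..n}, compo nu = compo mu -> Q@_nu = Q@_mu.

From HB Require Import structures.
From mathcomp Require Import all_boot all_order all_algebra all_field.
From mathcomp Require Import mpoly fingroup perm.
Set Implicit Arguments. Unset Strict Implicit. Unset Printing Implicit Defensive.
Import Order.TTheory GRing.Theory Num.Theory.
Local Open Scope ring_scope.

(* An element g of G_{n,m} sends x^nu to a monomial with the same composition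
   (its support relabelled order-preservingly by sigma_g), scaled by
   w(g)^c(nu). Permutation matrices reach every monomial with the composition
   of nu, so invariance under them is quasi-symmetry of the coefficients. The
   matrix diag(z, 1, ..., 1), z a primitive m-th root of unity, fixes every
   monomial and scales it by z^c(nu); invariance kills all coefficients with
   c(nu) = 1, i.e. P = Q(x_1^m, ..., x_n^m). Conversely, if P = Q(x^m) then
   c = 0 on its support and only the composition-preserving relabelling
   remains. *)

Lemma perm_map_filter_enum (T : finType) (P1 P2 : pred T) :
  size [seq x <- enum T | P1 x] = size [seq x <- enum T | P2 x] ->
  exists p : {perm T}, map p [seq x <- enum T | P1 x] = [seq x <- enum T | P2 x].
Proof.
move=> sz12; have [x0 _ | T0] := pickP (@predT T); last first.
  have nilT (r : seq T) : r = [::] by case: r => // x; have := T0 x.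
  by exists 1%g; rewrite !(nilT [seq x <- _ | _]).
pose L1 := [seq x <- enum T | P1 x] ++ [seq x <- enum T | predC P1 x].
pose L2 := [seq x <- enum T | P2 x] ++ [seq x <- enum T | predC P2 x].
have pL1 : perm_eq L1 (enum T) by rewrite perm_filterC.
have pL2 : perm_eq L2 (enum T) by rewrite perm_filterC.
have uL2 : uniq L2 by rewrite (perm_uniq pL2) enum_uniq.
have uL1 : uniq L1 by rewrite (perm_uniq pL1) enum_uniq.
have L1T x : x \in L1 by rewrite (perm_mem pL1) mem_enum.
have szL : size L1 = size L2 by rewrite (perm_size pL1) (perm_size pL2).
have idxL2 x : (index x L1 < size L2)%N by rewrite -szL index_mem.
pose f x := nth x L2 (index x L1).
have f_inj : injective f.
  move=> x y; rewrite /f (set_nth_default x y (idxL2 y)) => /eqP.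
  rewrite nth_uniq // => /eqP eq_idx.
  by rewrite -(nth_index x (L1T x)) eq_idx nth_index.
have fL1 : map f L1 = L2.
  apply: (@eq_from_nth _ x0); rewrite size_map // => i ltiL1.
  by rewrite (nth_map x0) // /f index_uniq // (set_nth_default x0) -?szL.
exists (perm f_inj).
have -> : [seq x <- enum T | P1 x] = take (size [seq x <- enum T | P1 x]) L1.
  by rewrite take_size_cat.
by rewrite map_take (eq_map (permE f_inj)) -/L1 fL1 sz12 take_size_cat.
Qed.

Section Compositions.
Variable n : nat.
Implicit Types (x nu mu : 'X_{1..n}) (s : 'I_n -> 'I_n).

(* [qs_mono] sorts with exactly this relation, so lemmas about it apply to
   [qs_mono] by conversion, unlike lemmas about the order of ['I_n]. *)
Definition ord_le (i j : 'I_n) := (i <= j)%N.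
Definition ord_lt (i j : 'I_n) := (i < j)%N.

Lemma ord_lt_trans : transitive ord_lt.
Proof. by move=> j i k; apply: ltn_trans. Qed.

Lemma ord_lt_irr : irreflexive ord_lt.
Proof. by move=> i; rewrite /ord_lt ltnn. Qed.

Lemma ord_le_trans : transitive ord_le.
Proof. by move=> j i k; apply: leq_trans. Qed.

Lemma ord_le_anti : antisymmetric ord_le.
Proof. by move=> i j /anti_leq /val_inj. Qed.

Lemma ord_le_total : total ord_le.
Proof. by move=> i j; apply: leq_total. Qed.

Lemma sorted_ord_lt (r : seq 'I_n) :
  sorted ord_lt r = uniq r && sorted ord_le r.
Proof.
have -> : sorted ord_lt r = sorted ltn (map val r) by rewrite sorted_map.
have -> : sorted ord_le r = sorted leq (map val r) by rewrite sorted_map.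
by rewrite ltn_sorted_uniq_leq (map_inj_uniq val_inj).
Qed.

Definition mnm_support x : seq 'I_n := [seq i <- enum 'I_n | x i != 0%N].

Definition mnm_of_compo (B : seq 'I_n) (c : seq nat) : 'X_{1..n} :=
  [multinom (if b \in B then nth 0%N c (index b B) else 0%N) | b < n].

Lemma mem_mnm_support x i : (i \in mnm_support x) = (x i != 0%N).
Proof. by rewrite mem_filter mem_enum andbT. Qed.

Lemma uniq_mnm_support x : uniq (mnm_support x).
Proof. by rewrite filter_uniq ?enum_uniq. Qed.

Lemma sorted_mnm_support x : sorted ord_lt (mnm_support x).
Proof.
apply: (sorted_filter ord_lt_trans).
have -> : sorted ord_lt (enum 'I_n) = sorted ltn (map val (enum 'I_n)).
  by rewrite sorted_map.
by rewrite val_enum_ord iota_ltn_sorted.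
Qed.

Lemma compoE x : compo x = map x (mnm_support x).
Proof. by []. Qed.

Lemma size_compo x : size (compo x) = size (mnm_support x).
Proof. by rewrite compoE size_map. Qed.

Lemma compo_neq0 x : all (fun k => k != 0%N) (compo x).
Proof. by apply/allP=> k /mapP [i]; rewrite mem_mnm_support => ? ->. Qed.

Lemma sort_perm_mnm_support (r : seq 'I_n) x :
  perm_eq r (mnm_support x) -> sort ord_le r = mnm_support x.
Proof.
move=> pr; apply: (sorted_eq ord_le_trans ord_le_anti).
- exact: (sort_sorted ord_le_total).
- by have := sorted_mnm_support x; rewrite sorted_ord_lt => /andP[].
- by rewrite (perm_sort ord_le).
Qed.

Section MnmOfCompo.
Variables (B : seq 'I_n) (c : seq nat).
Hypotheses (sB : sorted ord_lt B) (szc : size c = size B).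
Hypothesis c_neq0 : all (fun k => k != 0%N) c.

Lemma mnm_support_of_compo : mnm_support (mnm_of_compo B c) = B.
Proof.
apply: (irr_sorted_eq ord_lt_trans ord_lt_irr (sorted_mnm_support _) sB) => i.
rewrite mem_mnm_support mnmE; case: ifP => // iB.
by apply: (allP c_neq0); rewrite mem_nth // szc index_mem.
Qed.

Lemma compo_mnm_of_compo : compo (mnm_of_compo B c) = c.
Proof.
have uB : uniq B by move: sB; rewrite sorted_ord_lt => /andP[].
rewrite compoE mnm_support_of_compo.
apply: (@eq_from_nth _ 0%N); rewrite size_map // => k kB.
have x0 : 'I_n by move: kB; case: (B) => [|b].
by rewrite (nth_map x0) // mnmE mem_nth // index_uniq.
Qed.

End MnmOfCompo.

Lemma mnm_of_compoK x : mnm_of_compo (mnm_support x) (compo x) = x.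
Proof.
apply/mnmP=> i; rewrite mnmE; case: ifP => ix.
  by rewrite compoE (nth_map i) ?index_mem // nth_index.
by move: ix; rewrite mem_mnm_support => /negbFE/eqP.
Qed.

Definition relabel_support s nu := sort ord_le (map s (mnm_support nu)).

Lemma qs_monoE s nu :
  qs_mono s nu = mnm_of_compo (relabel_support s nu) (compo nu).
Proof.
apply/mnmP=> b; rewrite /qs_mono !mnmE; case: ifP => // bB.
rewrite compoE (nth_map b) //.
by move: bB; rewrite -index_mem size_sort size_map.
Qed.

Lemma eq_qs_mono s1 s2 nu : s1 =1 s2 -> qs_mono s1 nu = qs_mono s2 nu.
Proof. by move=> e12; rewrite !qs_monoE /relabel_support (eq_map e12). Qed.

Lemma qs_mono_id nu : qs_mono id nu = nu.
Proof.
rewrite qs_monoE /relabel_support map_id.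
by rewrite (sort_perm_mnm_support (perm_refl _)) mnm_of_compoK.
Qed.

Section InjectiveRelabelling.
Variable s : 'I_n -> 'I_n.
Hypothesis s_inj : injective s.

Lemma sorted_relabel_support nu : sorted ord_lt (relabel_support s nu).
Proof.
rewrite sorted_ord_lt sort_uniq (map_inj_uniq s_inj) uniq_mnm_support.
exact: (sort_sorted ord_le_total).
Qed.

Lemma size_relabel_support nu : size (compo nu) = size (relabel_support s nu).
Proof. by rewrite size_sort size_map size_compo. Qed.

Lemma mnm_support_qs_mono nu : mnm_support (qs_mono s nu) = relabel_support s nu.
Proof.
rewrite qs_monoE mnm_support_of_compo ?compo_neq0 //.
  exact: sorted_relabel_support.
exact: size_relabel_support.
Qed.

Lemma compo_qs_mono nu : compo (qs_mono s nu) = compo nu.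
Proof.
rewrite qs_monoE compo_mnm_of_compo ?compo_neq0 //.
  exact: sorted_relabel_support.
exact: size_relabel_support.
Qed.

Lemma qs_mono_inj : injective (qs_mono s).
Proof.
move=> nu1 nu2 e12.
have ec : compo nu1 = compo nu2 by rewrite -(compo_qs_mono nu1) e12 compo_qs_mono.
suff es : mnm_support nu1 = mnm_support nu2.
  by rewrite -(mnm_of_compoK nu1) -(mnm_of_compoK nu2) es ec.
have pe : perm_eq (map s (mnm_support nu1)) (map s (mnm_support nu2)).
  rewrite -(perm_sort ord_le) perm_sym -(perm_sort ord_le).
  rewrite -![sort _ _]/(relabel_support s _) -!mnm_support_qs_mono.
  by rewrite e12 perm_refl.
apply: (irr_sorted_eq ord_lt_trans ord_lt_irr); rewrite ?sorted_mnm_support //.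
by move=> i; rewrite -(mem_map s_inj) (perm_mem pe) (mem_map s_inj).
Qed.

End InjectiveRelabelling.

Lemma qs_mono_surj s : injective s -> forall mu, exists nu, qs_mono s nu = mu.
Proof.
move=> s_inj mu; pose p := perm s_inj.
exists (qs_mono (p^-1)%g mu).
have pinj : injective (p^-1)%g := @perm_inj _ _.
rewrite (eq_qs_mono _ (fun i => esym (permE s_inj i))) qs_monoE /relabel_support.
rewrite mnm_support_qs_mono // compo_qs_mono // (sort_perm_mnm_support (x := mu)).
  by rewrite mnm_of_compoK.
by rewrite -[X in perm_eq _ X](mapK (permKV p)) perm_map // perm_sort.
Qed.

Lemma qs_mono_transitive nu mu :
  compo nu = compo mu -> exists s : {perm 'I_n}, qs_mono s nu = mu.
Proof.
move=> e_compo.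
have [|p ep] :=
  @perm_map_filter_enum _ (fun i => nu i != 0%N) (fun i => mu i != 0%N).
  by rewrite -!/(mnm_support _) -!size_compo e_compo.
exists p; rewrite qs_monoE /relabel_support -/(mnm_support nu) ep.
by rewrite (sort_perm_mnm_support (perm_refl _)) e_compo mnm_of_compoK.
Qed.

End Compositions.

Section Divisibility.
Variables (n m : nat).
Implicit Types (x k : 'X_{1..n}).

Definition mnm_dvd x := [forall i, (m %| x i)%N].
Definition mnm_divn x : 'X_{1..n} := [multinom (x i %/ m)%N | i < n].

Lemma mnm_dvdE x : mnm_dvd x = all (dvdn m) (compo x).
Proof.
apply/forallP/allP => [dvd_x k /mapP[i _ ->] // | dvd_compo i].
have [-> | xi_neq0] := eqVneq (x i) 0%N; first exact: dvdn0.
by apply/dvd_compo/map_f; rewrite mem_mnm_support.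
Qed.

Lemma cKE x : cK m x = if mnm_dvd x then 0%N else 1%N.
Proof.
rewrite /cK /mnm_dvd; congr (if _ then _ else _); apply: eq_forallb => i.
by case: eqP => [->|]; rewrite ?dvdn0.
Qed.

Lemma mnm_divnK x : mnm_dvd x -> (mnm_divn x *+ m)%MM = x.
Proof. by move=> /forallP dvd_x; apply/mnmP => i; rewrite mulmnE mnmE divnK. Qed.

Lemma mnm_dvd_mulmn k : mnm_dvd (k *+ m)%MM.
Proof. by apply/forallP => i; rewrite mulmnE dvdn_mull. Qed.

Hypothesis m_gt0 : (0 < m)%N.

Lemma mulmn_inj : injective (fun k => (k *+ m)%MM).
Proof.
move=> k1 k2 /mnmP e12; apply/mnmP => i.
by apply/eqP; rewrite -(eqn_pmul2r m_gt0) -!mulmnE e12.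
Qed.

Lemma compo_mulmn k : compo (k *+ m)%MM = map (muln^~ m) (compo k).
Proof.
rewrite !compoE -map_comp; have -> : mnm_support (k *+ m)%MM = mnm_support k.
  by apply: eq_filter => i; rewrite mulmnE muln_eq0 negb_or (gtn_eqF m_gt0) andbT.
by apply: eq_map => i; rewrite /= mulmnE.
Qed.

Lemma compo_mnm_divn x y : mnm_dvd x -> mnm_dvd y ->
  compo x = compo y -> compo (mnm_divn x) = compo (mnm_divn y).
Proof.
move=> dvd_x dvd_y e_xy; apply: (@inj_map _ _ (muln^~ m)).
  by move=> k1 k2 /eqP; rewrite eqn_pmul2r // => /eqP.
by rewrite -!compo_mulmn !mnm_divnK.
Qed.

End Divisibility.

Section MonomialMatrices.
Variables (n m : nat) (s : {perm 'I_n}) (d : 'I_n -> algC).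
Hypothesis d_neq0 : forall i, d i != 0.

Definition monomial_mx : 'M[algC]_n := \matrix_(i, j) ((s i == j)%:R * d i).

Lemma monomial_mx_neq0 i j : (monomial_mx i j != 0) = (s i == j).
Proof. by rewrite mxE; case: (s i == j); rewrite ?mul1r ?mul0r ?eqxx ?d_neq0. Qed.

Lemma monomial_mx_Gnm : (forall i, d i ^+ m = 1) -> monomial_mx \in Gnm m.
Proof.
move=> d_root; apply/and3P; split.
- apply/forallP => i; apply/cards1P; exists (s i); apply/setP => j.
  by rewrite !inE monomial_mx_neq0 eq_sym.
- apply/forallP => j; apply/cards1P; exists ((s^-1)%g j); apply/setP => i.
  by rewrite !inE monomial_mx_neq0 (canF_eq (permK s)).
- apply/forallP => i; apply/forallP => j; apply/implyP.
  by rewrite monomial_mx_neq0 mxE => /eqP ->; rewrite eqxx mul1r d_root.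
Qed.

Lemma sigma_g_monomial_mx : sigma_g monomial_mx =1 s.
Proof.
move=> i; rewrite /sigma_g; case: pickP => [j | none].
  by rewrite /absmx mxE normr_eq0 monomial_mx_neq0 => /eqP.
by have := none (s i); rewrite /absmx mxE normr_eq0 monomial_mx_neq0 eqxx.
Qed.

Lemma wg_monomial_mx : wg monomial_mx = \prod_i d i.
Proof.
apply: eq_bigr => i _; rewrite (big_pred1 (s i)) => [|j].
  by rewrite mxE eqxx mul1r.
by rewrite /= monomial_mx_neq0 eq_sym.
Qed.

End MonomialMatrices.

Section GnmRelabelling.
Variables (n m : nat) (g : 'M[algC]_n).
Hypothesis g_Gnm : g \in Gnm m.

Lemma Gnm_sigma_neq0 i : g i (sigma_g g i) != 0.
Proof.
case/and3P: g_Gnm => /forallP g_rows _ _; have /cards1P [j gi] := g_rows i.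
rewrite /sigma_g; case: pickP => [k | none].
  by rewrite /absmx mxE normr_eq0.
have : j \in [set j | g i j != 0] by rewrite gi set11.
by rewrite inE; have := none j; rewrite /absmx mxE normr_eq0 => ->.
Qed.

Lemma Gnm_sigma_inj : injective (sigma_g g).
Proof.
move=> i1 i2 e12; case/and3P: g_Gnm => _ /forallP g_cols _.
have /cards1P [k gk] := g_cols (sigma_g g i1).
have : i1 \in [set i | g i (sigma_g g i1) != 0] by rewrite inE Gnm_sigma_neq0.
have : i2 \in [set i | g i (sigma_g g i1) != 0] by rewrite inE e12 Gnm_sigma_neq0.
by rewrite gk !inE => /eqP -> /eqP ->.
Qed.

End GnmRelabelling.

Lemma mcoeff_sum_msupp (R : nzRingType) n (P : {mpoly R[n]})
    (F : 'X_{1..n} -> R) x :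
  \sum_(nu <- msupp P) (P@_nu * F nu) * (nu == x)%:R = P@_x * F x.
Proof.
have -> : P@_x = \sum_(nu <- msupp P) P@_nu * (nu == x)%:R.
  rewrite {1}(mpolyE P) raddf_sum; apply: eq_bigr => nu _ /=.
  by rewrite /= mcoeffZ mcoeffX.
rewrite mulr_suml; apply: eq_bigr => nu _.
by case: eqVneq => [->|]; rewrite ?mulr1 ?mulr0 ?mul0r.
Qed.

Lemma mcoeff_qs_act n m (g : 'M[algC]_n) (P : {mpoly algC[n]}) nu : g \in Gnm m ->
  (qs_act m g P)@_(qs_mono (sigma_g g) nu) = P@_nu * wg g ^+ cK m nu.
Proof.
move=> g_Gnm; rewrite /qs_act raddf_sum.
rewrite -(mcoeff_sum_msupp _ (fun nu => wg g ^+ cK m nu)).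
apply: eq_bigr => nu' _.
by rewrite /= mcoeffZ mcoeffX (inj_eq (qs_mono_inj (Gnm_sigma_inj g_Gnm))).
Qed.

Lemma comp_mpolyX_pow (R : nzRingType) n m (k : 'X_{1..n}) :
  'X_[k] \mPo [tuple 'X_i ^+ m | i < n] = 'X_[k *+ m] :> {mpoly R[n]}.
Proof.
rewrite comp_mpolyX mpolyXE_id; apply: eq_bigr => i _.
by rewrite tnth_mktuple mulmnE -exprM mulnC.
Qed.

Lemma mcoeff_comp_pow (R : nzRingType) n m (Q : {mpoly R[n]}) x : (0 < m)%N ->
  (Q \mPo [tuple 'X_i ^+ m | i < n])@_x =
  if mnm_dvd m x then Q@_(mnm_divn m x) else 0.
Proof.
move=> m_gt0; rewrite comp_mpolyEX raddf_sum.
under eq_bigr do rewrite /= comp_mpolyX_pow mcoeffZ mcoeffX.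
case: ifP => dvd_x.
  rewrite -[RHS]mulr1 -(mcoeff_sum_msupp _ (fun=> 1)); apply: eq_bigr => k _.
  by rewrite mulr1 -{1}(mnm_divnK dvd_x) (inj_eq (mulmn_inj m_gt0)).
rewrite big1 // => k _; case: eqVneq => [e_kx | _]; last by rewrite mulr0.
by move: dvd_x; rewrite -e_kx mnm_dvd_mulmn.
Qed.

Section Invariance.
Variables (n m : nat) (P : {mpoly algC[n]}).
Hypothesis m_gt0 : (0 < m)%N.
Hypothesis P_inv : forall g, g \in Gnm m -> qs_act m g P = P.

Lemma qs_invariant_mnm_dvd nu : P@_nu != 0 -> mnm_dvd m nu.
Proof.
move=> P_nu_neq0; apply/forallP => i; apply: contraNT P_nu_neq0 => ndvd_mi.
have [z z_prim] := C_prim_root_exists m_gt0.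
have z_m : z ^+ m = 1 := prim_expr_order z_prim.
have z_neq1 : z != 1.
  apply: contraNneq ndvd_mi => z1; have := prim_order_dvd z_prim 1.
  by rewrite expr1 z1 eqxx dvdn1 => /eqP ->; apply: dvd1n.
have z_neq0 : z != 0.
  by apply: contra_eq_neq z_m => ->; rewrite expr0n gtn_eqF // eq_sym oner_eq0.
pose d j := if j == i then z else 1.
have d_neq0 j : d j != 0 by rewrite /d; case: ifP; rewrite ?oner_eq0.
have d_root j : d j ^+ m = 1 by rewrite /d; case: ifP; rewrite ?expr1n.
have prod_d : \prod_j d j = z.
  by rewrite (bigD1 i) //= big1 => [|j /negbTE]; rewrite /d ?eqxx ?mulr1 // => ->.
have := mcoeff_qs_act P nu (monomial_mx_Gnm 1%g d_neq0 d_root).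
rewrite (eq_qs_mono _ (sigma_g_monomial_mx 1%g d_neq0)).
rewrite (eq_qs_mono (s2 := id) _ (fun j => perm1 j)) qs_mono_id.
rewrite P_inv ?monomial_mx_Gnm //.
have ndvd_nu : ~~ mnm_dvd m nu by apply/forallPn; exists i.
rewrite wg_monomial_mx // prod_d cKE (negbTE ndvd_nu) expr1 => e_nu.
have : P@_nu * (z - 1) == 0 by rewrite mulrBr mulr1 -e_nu subrr.
by rewrite mulf_eq0 subr_eq0 (negbTE z_neq1) orbF.
Qed.

Lemma qs_invariant_compo nu mu : compo nu = compo mu -> P@_nu = P@_mu.
Proof.
move=> e_compo; have [s <-] := qs_mono_transitive e_compo.
have one_neq0 (i : 'I_n) : (1 : algC) != 0 by rewrite oner_eq0.
have one_root (i : 'I_n) : (1 : algC) ^+ m = 1 by rewrite expr1n.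
have := mcoeff_qs_act P nu (monomial_mx_Gnm s one_neq0 one_root).
rewrite (eq_qs_mono _ (sigma_g_monomial_mx s one_neq0)) P_inv ?monomial_mx_Gnm //.
by rewrite wg_monomial_mx // big1 // expr1n mulr1.
Qed.

Lemma qs_invariant_comp_pow :
  exists Q : {mpoly algC[n]},
    quasi_symmetric Q /\ P = Q \mPo [tuple 'X_i ^+ m | i < n].
Proof.
pose Q := \sum_(nu <- msupp P) P@_nu *: ('X_[mnm_divn m nu] : {mpoly algC[n]}).
have dvd_supp nu : nu \in msupp P -> mnm_dvd m nu.
  by rewrite mcoeff_msupp; apply: qs_invariant_mnm_dvd.
have Q_coef k : Q@_k = P@_(k *+ m).
  rewrite raddf_sum -[RHS]mulr1 -(mcoeff_sum_msupp _ (fun=> 1)).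
  apply: eq_big_seq => nu supp_nu; rewrite /= mcoeffZ mcoeffX mulr1.
  by rewrite -(inj_eq (mulmn_inj m_gt0)) mnm_divnK ?dvd_supp // eq_sym.
exists Q; split.
  move=> k1 k2 e12; rewrite !Q_coef; apply: qs_invariant_compo.
  by rewrite !compo_mulmn // e12.
rewrite [LHS]mpolyE raddf_sum; apply: eq_big_seq => nu supp_nu /=.
by rewrite comp_mpolyZ comp_mpolyX_pow mnm_divnK ?dvd_supp.
Qed.

End Invariance.

Lemma qs_act_comp_pow n m (Q : {mpoly algC[n]}) g : (0 < m)%N ->
  quasi_symmetric Q -> g \in Gnm m ->
  qs_act m g (Q \mPo [tuple 'X_i ^+ m | i < n]) =
  Q \mPo [tuple 'X_i ^+ m | i < n].
Proof.
move=> m_gt0 Q_qsym g_Gnm; have s_inj := Gnm_sigma_inj g_Gnm.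
apply/mpolyP => mu; have [nu <-] := qs_mono_surj s_inj mu.
rewrite mcoeff_qs_act // !mcoeff_comp_pow // cKE.
rewrite !mnm_dvdE compo_qs_mono //.
case: ifP => [dvd_nu | _]; last by rewrite mul0r.
rewrite expr0 mulr1; apply: Q_qsym.
by apply: compo_mnm_divn; rewrite ?mnm_dvdE ?compo_qs_mono.
Qed.

Theorem mainTheorem2 (n m : nat) (hn : (0 < n)%N) (hm : (0 < m)%N)
    (P : {mpoly algC[n]}) :
  (forall g : 'M[algC]_n, g \in @Gnm n m -> @qs_act n m g P = P) <->
  (exists Q : {mpoly algC[n]},
     quasi_symmetric Q /\ P = Q \mPo [tuple 'X_i ^+ m | i < n]).
Proof.
split; first exact: qs_invariant_comp_pow.
by case=> Q [Q_qsym ->] g; apply: qs_act_comp_pow.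
Qed.
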